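(* For every $n\in\mathbb{N}$, $t\in(0,1)$, $\varepsilon\in(0,1)$ and $\ell\ge1$ there exists $\mu=\mu_{n,t,\varepsilon,\ell}>0$ such that for all $\gamma\ge0$, $\lambda\ge1$ the following holds: if $A,B\subset\mathbb{R}^n$ are $(\gamma,\ell,\lambda,\mu)$ conelike with associated convex sets $C_A,C_B$, then $$tA+(1-t)B\supset t(1-\varepsilon/4)C_A+(1-t)C_B.$$
   Context: Scalar multiples of sets are dilations about the origin, $X+Y$ is the Minkowski sum, $o$ the origin, $B(p,r)$ the open Euclidean ball, $|\cdot|$ Lebesgue measure. A convex set $C\subset\mathbb{R}^n$ is a cone if there are a hyperplane $H$ not containing the origin and a bounded convex set $P\subset H$ with $C=\bigcup_{s\ge0}sP$. Sets $A,B\subset\mathbb{R}^n$ are called $(\gamma,\ell,\lambda,\mu)$ conelike if there exist convex sets $C_A\supset A$, $C_B\supset B$ with $|C_A|=|C_B|=(1+\gamma)|A|=(1+\gamma)|B|$, a convex set $K$, and a set $S''$ obtained by intersecting a cone with a half-space, such that: (1) $B(o,1/\ell)\subset C_A,C_B\subset B(o,\ell)$; (2) for some $z\in\mathbb{R}^n$, each of $A-z$, $C_A-z$, $B-z$, $C_B-z$ contains $S''$ and is contained in $\lambda S''$; (3) for some $x,y\in\mathbb{R}^n$, each of $A+x$, $C_A+x$, $B+y$, $C_B+y$ contains $K$ and is contained in $(1+\mu)K$. *)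

From HB Require Import structures.
From mathcomp Require Import all_boot all_order all_algebra.
From mathcomp Require Import all_classical all_reals all_analysis.
Set Implicit Arguments. Unset Strict Implicit. Unset Printing Implicit Defensive.
Import Order.TTheory GRing.Theory Num.Theory.
Local Open Scope classical_set_scope.
Local Open Scope ring_scope.

Section Defs.
Context {R : realType} {n : nat}.
Notation V := 'rV[R]_n.

Definition dotv (u v : V) : R := \sum_(i < n) u ord0 i * v ord0 i.
Definition enorm (u : V) : R := Num.sqrt (dotv u u).

Definition eball (p : V) (r : R) : set V := [set x | enorm (x - p) < r].

Definition dil (s : R) (X : set V) : set V := [set s *: x | x in X].
Definition minksum (X Y : set V) : set V := [set x + y | x in X & y in Y].
Definition transl (X : set V) (z : V) : set V := [set x + z | x in X].

Definition convexv (X : set V) : Prop :=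
  forall x y, X x -> X y -> forall s : R, 0 <= s <= 1 -> X (s *: x + (1 - s) *: y).

Definition boundedv (X : set V) : Prop := exists M : R, forall x, X x -> enorm x <= M.

Definition rbox (a b : V) : set V :=
  [set x | forall i : 'I_n, a ord0 i <= x ord0 i <= b ord0 i].
Definition boxvol (a b : V) : R := \prod_(i < n) Num.max 0 (b ord0 i - a ord0 i).
Definition lebm (X : set V) : \bar R :=
  ereal_inf [set s : \bar R | exists a b : nat -> V,
    X `<=` \bigcup_k rbox (a k) (b k) /\
    s = (\sum_(0 <= k <oo) (boxvol (a k) (b k))%:E)%E].

Definition leb_measurable (A : set V) : Prop :=
  forall E : set V, lebm E = (lebm (E `&` A) + lebm (E `\` A))%E.

Definition is_cone (C : set V) : Prop :=
  convexv C /\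
  exists (v : V) (c : R) (P : set V),
    v != 0 /\ c != 0 /\ P `<=` [set x | dotv v x = c] /\
    boundedv P /\ convexv P /\
    C = \bigcup_(s in [set s : R | 0 <= s]) dil s P.

Definition halfspace (Hs : set V) : Prop :=
  exists (w : V) (c : R), w != 0 /\ Hs = [set x | dotv w x <= c].

Definition conelike (gamma ell lambda mu : R) (A B CA CB : set V) : Prop :=
  convexv CA /\ convexv CB /\ A `<=` CA /\ B `<=` CB /\
  lebm CA = ((1 + gamma)%:E * lebm A)%E /\ lebm CB = ((1 + gamma)%:E * lebm B)%E /\
  lebm A = lebm B /\
  exists (K S2 : set V),
    convexv K /\
    (exists C Hs, is_cone C /\ halfspace Hs /\ S2 = C `&` Hs) /\
    (* (1) *)
    eball 0 ell^-1 `<=` CA /\ eball 0 ell^-1 `<=` CB /\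
    CA `<=` eball 0 ell /\ CB `<=` eball 0 ell /\
    (* (2) *)
    (exists z : V, forall X, (X = A \/ X = CA \/ X = B \/ X = CB) ->
        S2 `<=` transl X (- z) /\ transl X (- z) `<=` dil lambda S2) /\
    (* (3) *)
    (exists x y : V,
        (forall X, (X = A \/ X = CA) -> K `<=` transl X x /\ transl X x `<=` dil (1 + mu) K) /\
        (forall X, (X = B \/ X = CB) -> K `<=` transl X y /\ transl X y `<=` dil (1 + mu) K)).

End Defs.

(* Only conditions (1) and (3) and the convexity of K are used.  Write
   p = (t - d) a + (1 - t) b with a in C_A, b in C_B and d = t eps / 4.  The
   points k1 = (a + x) / (1 + mu) and k2 = (b + y) / (1 + mu) lie in K, and
   p + t x + (1 - t) y = (1 + mu) (1 - d) m + d x with m a convex combination of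
   k1 and k2.  The defect of this point from a convex combination of m and the
   point x / (1 + mu) of K is of size mu |x| / d; since K contains the ball of
   radius 1 / (l (1 + mu)) about x / (1 + mu), it is absorbed as soon as mu is
   small compared with d / l^2, provided |x| = O(l).  That bound holds because K
   contains (1 + mu)^-j x for every j >= 1, so that ((1 + mu)^-j - 1) x lies in
   C_A, inside B(o, l).  The resulting point q of K splits p as
   t (q - x) + (1 - t) (q - y) with q - x in A and q - y in B. *)
From HB Require Import structures.
From mathcomp Require Import all_boot all_order all_algebra.
From mathcomp Require Import all_classical all_reals all_analysis.
From mathcomp Require Import ring lra.
Set Implicit Arguments. Unset Strict Implicit. Unset Printing Implicit Defensive.
Import Order.TTheory GRing.Theory Num.Theory.
Local Open Scope classical_set_scope.
Local Open Scope ring_scope.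

Lemma bernoulli_ineq (R : realDomainType) (m : R) (N : nat) :
  0 <= m -> 1 + N%:R * m <= (1 + m) ^+ N.
Proof.
move=> m0; elim: N => [|N IH]; first by rewrite mul0r addr0 expr0.
have Nm0 : 0 <= N%:R * m by rewrite mulr_ge0.
have IHm : (1 + N%:R * m) * (1 + m) <= (1 + m) ^+ N * (1 + m).
  by rewrite ler_pM2r //; lra.
rewrite exprS -natr1; nra.
Qed.

Section EuclideanGeometry.
Context {R : realType} {n : nat}.
Notation V := 'rV[R]_n.

Lemma dotvZ (a : R) (u v : V) : dotv (a *: u) (a *: v) = a ^+ 2 * dotv u v.
Proof. by rewrite /dotv mulr_sumr; apply: eq_bigr => i _; rewrite !mxE; ring. Qed.

Lemma enorm_ge0 (v : V) : 0 <= enorm v.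
Proof. exact: sqrtr_ge0. Qed.

Lemma enormZ (a : R) (v : V) : enorm (a *: v) = `|a| * enorm v.
Proof. by rewrite /enorm dotvZ sqrtrM ?sqr_ge0 // sqrtr_sqr. Qed.

Lemma enorm0 : enorm (0 : V) = 0.
Proof. by rewrite -(scale0r (0 : V)) enormZ normr0 mul0r. Qed.

Lemma in_eball0 (r : R) (v : V) : eball 0 r v <-> enorm v < r.
Proof. by rewrite /eball /= subr0. Qed.

Lemma translE (X : set V) (z : V) : transl X z = [set w | X (w - z)].
Proof.
apply/seteqP; split => [_ [v Xv <-]|w Xw] /=; first by rewrite addrK.
by exists (w - z); rewrite ?subrK.
Qed.

Lemma dilE (c : R) (X : set V) : c != 0 -> dil c X = [set w | X (c^-1 *: w)].
Proof.
move=> c0; apply/seteqP; split => [_ [v Xv <-]|w Xw] /=.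
  by rewrite scalerA mulVf // scale1r.
by exists (c^-1 *: w); rewrite // scalerA divff // scale1r.
Qed.

End EuclideanGeometry.

Section ConelikeShrink.
Context {R : realType} {n : nat}.
Notation V := 'rV[R]_n.

Variables (A B CA CB K : set V) (x y : V) (mu ell : R).
Hypothesis mu_gt0 : 0 < mu.
Hypothesis ell_gt0 : 0 < ell.
Hypothesis convexK : convexv K.
Hypothesis K_sub_A : K `<=` transl A x.
Hypothesis K_sub_B : K `<=` transl B y.
Hypothesis K_sub_CA : K `<=` transl CA x.
Hypothesis CA_sub_K : transl CA x `<=` dil (1 + mu) K.
Hypothesis CB_sub_K : transl CB y `<=` dil (1 + mu) K.
Hypothesis ball_sub_CA : eball 0 ell^-1 `<=` CA.
Hypothesis CA_sub_ball : CA `<=` eball 0 ell.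

Let mu1_gt0 : 0 < 1 + mu. Proof. by rewrite addr_gt0. Qed.
Let mu1_neq0 : 1 + mu != 0. Proof. by rewrite gt_eqF. Qed.

Lemma shiftCA_in_K (a : V) : CA a -> K ((1 + mu)^-1 *: (a + x)).
Proof.
move=> CAa; have := @CA_sub_K (a + x).
by rewrite translE dilE //= addrK; apply.
Qed.

Lemma shiftCB_in_K (b : V) : CB b -> K ((1 + mu)^-1 *: (b + y)).
Proof.
move=> CBb; have := @CB_sub_K (b + y).
by rewrite translE dilE //= addrK; apply.
Qed.

Lemma K_dilV (k : V) : K k -> K ((1 + mu)^-1 *: k).
Proof. by move=> /K_sub_CA; rewrite translE /= => /shiftCA_in_K; rewrite subrK. Qed.

Lemma K_ball (u : V) : enorm u < ell^-1 -> K ((1 + mu)^-1 *: (u + x)).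
Proof. by move=> /in_eball0 /ball_sub_CA /shiftCA_in_K. Qed.

Lemma K_expV_shift (j : nat) : K (((1 + mu) ^+ j.+1)^-1 *: x).
Proof.
elim: j => [|j IH]; first by rewrite expr1 -[x]add0r; apply/K_ball; rewrite enorm0 invr_gt0.
by move/K_dilV: IH; rewrite scalerA -invfM -exprS.
Qed.

Lemma enorm_shift_lt (N : nat) : 2 <= (1 + mu) ^+ N.+1 -> enorm x < 2 * ell.
Proof.
move=> powN; have powV_le : (1 + mu) ^- N.+1 <= 2^-1.
  by rewrite lef_pV2 ?posrE ?exprn_gt0.
have := K_sub_CA (K_expV_shift N); rewrite translE /= -{2}[x]scale1r -scalerBl.
move=> /CA_sub_ball /in_eball0; rewrite enormZ ler0_norm; last lra.
have := enorm_ge0 x; have := ell_gt0; nra.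
Qed.

Lemma K_scale_shift (N : nat) (d : R) (m : V) :
  2 <= (1 + mu) ^+ N.+1 -> 0 < d < 1 -> mu * (2 * ell ^+ 2 + 1) <= d ->
  K m -> K (((1 + mu) * (1 - d)) *: m + d *: x).
Proof.
move=> powN /andP[d_gt0 d_lt1] mu_small Km.
have x_lt := enorm_shift_lt powN; have x_ge0 := enorm_ge0 x.
have mu_pos := mu_gt0; have ell_pos := ell_gt0.
have d'_gt0 : 0 < d - mu * (1 - d) by nra.
have Kz : K ((1 + mu)^-1 *: ((mu / (d - mu * (1 - d))) *: x + x)).
  apply: K_ball; rewrite enormZ ger0_norm ?divr_ge0 ?ltW //.
  have : mu * ell * enorm x < mu * ell * (2 * ell) by rewrite ltr_pM2l ?mulr_gt0.
  move=> bound; rewrite mulrAC ltr_pdivrMr // [X in _ < X]mulrC ltr_pdivlMr //; nra.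
have s01 : 0 <= 1 - (d - mu * (1 - d)) <= 1 by apply/andP; split; nra.
have := convexK Km Kz s01; congr K; apply/matrixP => i j; rewrite !mxE.
by field; rewrite !gt_eqF.
Qed.

Lemma minksum_dil_shrink_sub (N : nat) (t d : R) :
  2 <= (1 + mu) ^+ N.+1 -> 0 < d <= t -> t < 1 -> mu * (2 * ell ^+ 2 + 1) <= d ->
  minksum (dil (t - d) CA) (dil (1 - t) CB) `<=` minksum (dil t A) (dil (1 - t) B).
Proof.
move=> powN /andP[d_gt0 d_le_t] t_lt1 mu_small _ [_ [a CAa <-] [_ [b CBb <-] <-]].
have d_lt1 : 0 < d < 1 by apply/andP; split; lra.
have s01 : 0 <= (t - d) / (1 - d) <= 1.
  by apply/andP; split; [rewrite divr_ge0 |rewrite ler_pdivrMr ?mul1r]; lra.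
have Km := convexK (shiftCA_in_K CAa) (shiftCB_in_K CBb) s01.
have Kq := K_scale_shift powN d_lt1 mu_small Km; set q := _ + d *: x in Kq.
exists (t *: (q - x)); first by exists (q - x) => //; move: (K_sub_A Kq); rewrite translE.
exists ((1 - t) *: (q - y)); first by exists (q - y) => //; move: (K_sub_B Kq); rewrite translE.
rewrite /q; apply/matrixP => i j; rewrite !mxE.
by field; rewrite !gt_eqF //; lra.
Qed.

End ConelikeShrink.

Theorem mainTheorem14 (R : realType) (n : nat) (t eps ell : R) :
  0 < t < 1 -> 0 < eps < 1 -> 1 <= ell ->
  exists mu : R, 0 < mu /\
    forall (gamma lambda : R), 0 <= gamma -> 1 <= lambda ->
    forall A B CA CB : set 'rV[R]_n,
      leb_measurable A -> leb_measurable B ->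
      conelike gamma ell lambda mu A B CA CB ->
      minksum (dil (t * (1 - eps / 4)) CA) (dil (1 - t) CB)
        `<=` minksum (dil t A) (dil (1 - t) B).
Proof.
move=> /andP[t_gt0 t_lt1] /andP[eps_gt0 eps_lt1] ell_ge1.
have ell_gt0 : 0 < ell by lra.
set d := t * eps / 4.
have d_range : 0 < d <= t by apply/andP; split; rewrite /d; nra.
have d_gt0 : 0 < d by case/andP: d_range.
set N := Num.truncn ((2 * ell ^+ 2 + 1) / d).
set mu := (N.+1%:R : R)^-1.
have mu_gt0 : 0 < mu by rewrite invr_gt0.
have mu_small : mu * (2 * ell ^+ 2 + 1) <= d.
  have := truncnS_gt ((2 * ell ^+ 2 + 1) / d); rewrite -/N ltr_pdivrMr // => c_lt.
  rewrite mulrC ler_pdivrMr ?ltr0Sn //; lra.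
have powN : 2 <= (1 + mu) ^+ N.+1.
  by have := bernoulli_ineq N.+1 (ltW mu_gt0); rewrite mulfV.
exists mu; split => // gamma lambda _ _ A B CA CB _ _.
case=> _ [_ [_ [_ [_ [_ [_ [K [_ [convexK [_ [ball_sub_CA [_ [CA_sub_ball
  [_ [_ [x [y [HA HB]]]]]]]]]]]]]]]]]].
have [K_sub_A _] := HA A (or_introl erefl).
have [K_sub_CA CA_sub_K] := HA CA (or_intror erefl).
have [K_sub_B _] := HB B (or_introl erefl).
have [_ CB_sub_K] := HB CB (or_intror erefl).
have -> : t * (1 - eps / 4) = t - d by rewrite /d; ring.
apply: (minksum_dil_shrink_sub mu_gt0 ell_gt0 convexK K_sub_A K_sub_B K_sub_CA
  CA_sub_K CB_sub_K ball_sub_CA CA_sub_ball powN d_range t_lt1 mu_small).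
Qed.
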